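(* Let $\Omega\subset\mathbb{R}^2$ be a box such that $\overline{\Omega}=\bigcup_i\overline{\Omega_i}$ for at most countably many mutually disjoint boxes $\Omega_i\subset\mathbb{R}^2$, all with endpoints on the grid for the mesh size vector $h=(h_1,h_2)$. Then for every $u:\overline{\Omega}_h\to\mathbb{R}$ and $1\le p<\infty$, $$\|u\|^p_{L^p(\Omega_h)}\le\sum_i\|u\|^p_{L^p(\Omega_{i,h})}\le4\|u\|^p_{L^p(\Omega_h)},\qquad \|u\|^2_{D(\Omega_h)}\le\sum_i\|u\|^2_{D(\Omega_{i,h})}\le2\|u\|^2_{D(\Omega_h)}.$$
   Context: For a box $B=(a_1,b_1)\times(a_2,b_2)$ with $a_j=k_jh_j$, $b_j=l_jh_j$, $k_j,l_j\in\mathbb{Z}\cup\{\pm\infty\}$, $l_j-k_j>1$: $\mathbb{R}^2_h=\{(h_1z_1,h_2z_2):z_j\in\mathbb{Z}\}$, $\overline{B}_h=\overline{B}\cap\mathbb{R}^2_h$, $\partial B_h=\partial B\cap\mathbb{R}^2_h$, $\partial_j^+B_h=\partial B_h\cap\{x_j=b_j\}$, $\mathbf{h}=h_1h_2$, $D_j^+u(x)=(u(x+h_je_j)-u(x))/h_j$. Norms: $\|u\|^p_{L^p(B_h)}=\sum_{x\in\overline{B}_h}|u(x)|^p\mathbf{h}$, $\|u\|^2_{D(B_h)}=\sum_{j=1}^2\sum_{x\in\overline{B}_h\setminus\partial_j^+B_h}|D_j^+u(x)|^2\mathbf{h}$. $\Omega_{i,h}$ denotes the discretization of $\Omega_i$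 in this sense. *)

From HB Require Import structures.
From mathcomp Require Import all_boot all_order all_algebra.
From mathcomp Require Import all_classical all_reals all_analysis.
Set Implicit Arguments. Unset Strict Implicit. Unset Printing Implicit Defensive.
Import Order.TTheory GRing.Theory Num.Theory.
Import numFieldNormedType.Exports.
Local Open Scope classical_set_scope.
Local Open Scope ring_scope.

(* A grid box B = (a_1,b_1) x (a_2,b_2) with a_j = k_j h_j, b_j = l_j h_j.
   Coordinates are indexed by j : 'I_2 (ord0 = first coordinate).
   lo B j = Some k_j (finite) or None (k_j = -oo);
   hi B j = Some l_j (finite) or None (l_j = +oo). *)
Record box := Box { lo : 'I_2 -> option int; hi : 'I_2 -> option int }.

Definition box_wf (B : box) : Prop :=
  forall j : 'I_2, match lo B j, hi B j return Prop with
                   | Some k, Some l => (1 < l - k)%R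
                   | _, _ => True end.

Definition coord {R : Type} (x : R * R) (j : 'I_2) : R :=
  if j == ord0 then x.1 else x.2.

Section Defs.
Variable R : realType.
Implicit Types (h : R * R) (B : box) (u : int * int -> R).

Definition lob h B j : option R := omap (fun k : int => k%:~R * coord h j) (lo B j).
Definition hib h B j : option R := omap (fun l : int => l%:~R * coord h j) (hi B j).

Definition box_set h B : set (R * R) :=
  [set x | forall j : 'I_2,
     (match lob h B j return Prop with Some a => a < coord x j | None => True end) /\
     (match hib h B j return Prop with Some b => coord x j < b | None => True end)].

Definition gp h (z : int * int) : R * R := (z.1%:~R * h.1, z.2%:~R * h.2).

Definition gridcl h B : set (int * int) :=
  [set z | closure (box_set h B) (gp h z)].

Definition bdry_plus h B (j : 'I_2) : set (int * int) :=
  [set z | (closure (box_set h B) `\` interior (box_set h B)) (gp h z) /\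
           match hib h B j return Prop with Some b => coord (gp h z) j = b | None => False end].

Definition shift (z : int * int) (j : 'I_2) : int * int :=
  if j == ord0 then (z.1 + 1, z.2) else (z.1, z.2 + 1).

Definition Dplus h u (j : 'I_2) (z : int * int) : R :=
  (u (shift z j) - u z) / coord h j.

Definition Lp_pow h (p : R) u B : \bar R :=
  \esum_(z in gridcl h B) ((`|u z| `^ p) * (h.1 * h.2))%:E.

Definition D_sq h u B : \bar R :=
  (\sum_(j < 2)
     \esum_(z in gridcl h B `\` bdry_plus h B j) ((Dplus h u j z) ^+ 2 * (h.1 * h.2))%:E)%E.

End Defs.

(* A grid point z of a box is a corner of the grid cell centred at
   z + (±h_1/2, ±h_2/2), where the sign is - in direction j exactly when z lies
   on the upper face x_j = b_j; this cell lies inside the box.  If two disjoint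
   pieces contain z with the same upper-face pattern, they share that cell
   centre, so z lies in at most 4 pieces, and in at most 2 among those where z
   is off the face x_j = b_j (the pattern in direction j is then fixed).  For
   the lower bounds, the cell of Om at z lies in the closure of some piece,
   which therefore contains z, off its upper face in direction j if z is off
   the one of Om. *)
From Pilot Require Import Defs.
From HB Require Import structures.
From mathcomp Require Import all_boot all_order all_algebra.
From mathcomp Require Import all_classical all_reals all_analysis.
From mathcomp Require Import zify lra.
(* Re-exported after mathcomp so that [coord] means [Defs.coord], not [vector.coord]. *)
Import Pilot.Defs.
Import Order.TTheory GRing.Theory Num.Theory.
Import numFieldNormedType.Exports.
Set Implicit Arguments. Unset Strict Implicit. Unset Printing Implicit Defensive.
Local Open Scope classical_set_scope.
Local Open Scope ring_scope.

Section ExtendedSums.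
Variable R : realType.
Local Open Scope ereal_scope.

Lemma le_esum_subset (T : choiceType) (A B : set T) (f : T -> \bar R) :
  A `<=` B -> \esum_(x in A) f x <= \esum_(x in B) f x.
Proof.
move=> AB; apply: ge_ereal_sup => _ [X [finX XA] <-].
by apply: ereal_sup_ubound; exists X => //; split => //; exact: subset_trans AB.
Qed.

Lemma esum_cst_setT (L : finType) (c : \bar R) : 0 <= c ->
  \esum_(l in [set: L]) c = #|L|%:R%:E * c.
Proof.
move=> c0; rewrite esum_fset //; last exact: finite_finset.
have -> : [set: L] = [set` enum L] by apply/seteqP; split => l //= _; rewrite mem_enum.
by rewrite -fsbig_seq ?enum_uniq // big_enum sumr_const mule_natl.
Qed.

Lemma le_esum_cover (T I : choiceType) (f : T -> \bar R) (S : set T)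
    (Si : I -> set T) :
  (forall x, 0 <= f x) -> S `<=` \bigcup_i Si i ->
  \esum_(z in S) f z <= \esum_(i in [set: I]) \esum_(z in Si i) f z.
Proof.
move=> f0 SSi; have [->|/set0P[z0 /SSi[i0 _ _]]] := eqVneq S set0.
  by rewrite esum_set0; apply: esum_ge0 => i _; exact: esum_ge0.
have /choice[g Sg] : forall z, exists i, S z -> Si i z.
  by move=> z; have [/SSi[i _ Siz]|] := pselect (S z); [exists i | exists i0].
rewrite esum_esum; last by move=> *; exact: f0.
rewrite -(esum_image _ (fun z => (g z, z)) (fun k => f k.2)); last by move=> z z' _ _ [].
by apply: le_esum_subset => _ [z Sz <-]; split => //=; exact: Sg.
Qed.

(* Each point lies in at most [#|L|] of the sets [Si i]: on a common point,
   the label [q i z] tells the sets apart. *)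
Lemma le_esum_overlap (T I : choiceType) (L : finType) (f : T -> \bar R)
    (S : set T) (Si : I -> set T) (q : I -> T -> L) :
  (forall x, 0 <= f x) -> (forall i, Si i `<=` S) ->
  (forall i j z, Si i z -> Si j z -> q i z = q j z -> i = j) ->
  \esum_(i in [set: I]) \esum_(z in Si i) f z <= #|L|%:R%:E * \esum_(z in S) f z.
Proof.
move=> f0 SiS q_inj; rewrite esum_esum; last by move=> *; exact: f0.
pose e (k : I * T) := (q k.1 k.2, k.2).
have e_inj : set_inj ([set: I] `*`` Si) e.
  move=> [i z] [j z'] /set_mem[_ /= Siz] /set_mem[_ /= Sjz'] [+ /= zz'].
  by subst z' => /(q_inj _ _ _ Siz Sjz') ->.
rewrite -(esum_image _ e (fun k => f k.2)) //.
apply: (@le_trans _ _ (\esum_(k in [set: L] `*`` (fun=> S)) f k.2)).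
  by apply: le_esum_subset => _ [[i z] [_ /= Siz] <-]; split => //=; exact: SiS Siz.
rewrite -(esum_esum (a := fun _ z => f z)) //.
by rewrite esum_cst_setT //; exact: esum_ge0.
Qed.

End ExtendedSums.

Section GridBox.
Variables (R : realType) (h : R * R).
Implicit Types (B : box) (x y : R * R) (z : int * int).

Definition closed_box B x : Prop :=
  forall j : 'I_2,
    (match lob h B j with Some a => a <= coord x j | None => True end) /\
    (match hib h B j with Some b => coord x j <= b | None => True end).

Lemma coord_ball x y (e : R) (j : 'I_2) :
  ball x e y -> `|coord x j - coord y j| < e.
Proof. by case=> ? ?; rewrite /coord; case: ifP. Qed.

Lemma closure_box_set_sub B : closure (box_set h B) `<=` closed_box B.
Proof.
move=> x clx j; split.
- case E: (lob h B j) => [a|] //; rewrite leNgt; apply/negP => xa.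
  have e0 : 0 < a - coord x j by rewrite subr_gt0.
  have [y [By /(coord_ball j)]] := clx _ (nbhsx_ballx x _ e0).
  by move: (By j).1; rewrite E ltr_norml; lra.
- case E: (hib h B j) => [b|] //; rewrite leNgt; apply/negP => bx.
  have e0 : 0 < coord x j - b by rewrite subr_gt0.
  have [y [By /(coord_ball j)]] := clx _ (nbhsx_ballx x _ e0).
  by move: (By j).2; rewrite E ltr_norml; lra.
Qed.

(* Approach [x] along the segment towards an interior point [P]. *)
Lemma closed_box_sub_closure B P :
  box_set h B P -> closed_box B `<=` closure (box_set h B).
Proof.
move=> BP x cbx N /nbhs_ballP[e /= e0 xeN].
pose d := 1 + `|P.1 - x.1| + `|P.2 - x.2|.
have n1 := normr_ge0 (P.1 - x.1); have n2 := normr_ge0 (P.2 - x.2).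
have [d1 d2] : `|P.1 - x.1| < d /\ `|P.2 - x.2| < d by rewrite /d; split; lra.
pose t := e / (e + 2 * d).
have ed0 : 0 < e + 2 * d by lra.
have t0 : 0 < t by rewrite divr_gt0.
have t1 : t < 1 by rewrite ltr_pdivrMr // mul1r; lra.
have td : t * d < e by rewrite /t mulrAC ltr_pdivrMr; nra.
pose y := (x.1 + t * (P.1 - x.1), x.2 + t * (P.2 - x.2)).
have coord_y j : coord y j = coord x j + t * (coord P j - coord x j).
  by rewrite /coord; case: ifP.
exists y; split.
- move=> j; have [xl xu] := cbx j; have [Pl Pu] := BP j; rewrite coord_y; split.
    by move: xl Pl; case: (lob h B j) => // a; nra.
  by move: xu Pu; case: (hib h B j) => // b; nra.
- apply: xeN; split; rewrite /ball /= opprD addrA subrr add0r normrN normrM (gtr0_norm t0).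
  + by move: d1; nra.
  + by move: d2; nra.
Qed.
End GridBox.

Lemma ler_intS (R : numDomainType) (a b : int) :
  (a + 1 <= b)%R -> a%:~R + 1 <= b%:~R :> R.
Proof. by rewrite -[1 : R]/(1%:~R) -intrD ler_int. Qed.

Lemma le_int_of_ler_addr (R : realDomainType) (a b : int) (t : R) :
  t < 1 -> a%:~R <= b%:~R + t -> (a <= b)%R.
Proof.
move=> t1 abt; rewrite leNgt -lezD1; apply/negP => /(ler_intS R); lra.
Qed.

Lemma le_int_of_ler_addl (R : realDomainType) (a b : int) (t : R) :
  -1 < t -> b%:~R + t <= a%:~R -> (b <= a)%R.
Proof.
move=> t1 abt; rewrite leNgt -lezD1; apply/negP => /(ler_intS R); lra.
Qed.

Lemma ord2_neq0 (j : 'I_2) : j != ord0 -> j = ord_max.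
Proof. by move=> j0; apply/val_inj; case: j j0 => [[|[|m]] Hm]. Qed.

Section CellPoints.
Variables (R : realType) (h : R * R).
Hypotheses (h1 : 0 < h.1) (h2 : 0 < h.2).
Implicit Types (B : box) (z : int * int) (s : 'I_2 -> bool).

Definition half_offset (b : bool) : R := if b then - 2^-1 else 2^-1.

Lemma half_offset_bounds (b : bool) : -1 < half_offset b /\ half_offset b < 1.
Proof. by rewrite /half_offset; case: b; split; lra. Qed.

(* On the closed box, [l_j <= z_j] means [z_j = l_j]. *)
Definition at_upper B z (j : 'I_2) : bool :=
  if hi B j is Some l then (l <= coord z j)%R else false.

(* The centre of one of the four grid cells having [z] as a corner; [s j]
   selects the cell below [z] in direction [j]. *)
Definition cell_point z s : R * R :=
  ((z.1%:~R + half_offset (s ord0)) * h.1,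
   (z.2%:~R + half_offset (s ord_max)) * h.2).

Lemma coord_h_gt0 (j : 'I_2) : 0 < coord h j.
Proof. by rewrite /coord; case: ifP. Qed.

Lemma coord_gp z (j : 'I_2) : coord (gp h z) j = (coord z j)%:~R * coord h j.
Proof. by rewrite /coord; case: ifP. Qed.

Lemma coord_cell_point z s (j : 'I_2) :
  coord (cell_point z s) j = ((coord z j)%:~R + half_offset (s j)) * coord h j.
Proof. by rewrite /coord; case: ifPn => [/eqP -> // | /ord2_neq0 ->]. Qed.

Lemma cell_point_at_upper_in_box B z :
  box_wf B -> closed_box h B (gp h z) -> box_set h B (cell_point z (at_upper B z)).
Proof.
move=> wfB zB j; have hj := coord_h_gt0 j; have := wfB j; have [] := zB j.
rewrite /lob /hib /at_upper coord_cell_point coord_gp /half_offset.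
case: (lo B j) => [k|]; case: (hi B j) => [l|] /=;
  rewrite ?ltr_pM2r ?ler_pM2r // ?ler_int; set Z := coord z j.
- move=> kZ Zl kl; case: ifPn => lZ.
    have -> : Z = l by lia.
    have /(ler_intS R) : (k + 1 <= l)%R by lia.
    by split; lra.
  have : (Z + 1 <= l)%R by lia.
  by move: kZ; rewrite -(ler_int R) => kZ /(ler_intS R); split; lra.
- by rewrite -(ler_int R) => kZ _ _; split => //; lra.
- move=> _ Zl _; split=> //; case: ifPn => lZ; first by move: Zl; rewrite -(ler_int R); lra.
  have /(ler_intS R) : (Z + 1 <= l)%R by lia.
  lra.
Qed.

Lemma closed_box_gp_of_cell_point B z s :
  closed_box h B (cell_point z s) -> closed_box h B (gp h z).
Proof.
move=> zB j; have hj := coord_h_gt0 j; have [t0 t1] := half_offset_bounds (s j).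
have [] := zB j; rewrite /lob /hib coord_cell_point coord_gp.
case: (lo B j) => [k|]; case: (hi B j) => [l|] //=; rewrite ?ler_pM2r // ?ler_int.
- by move=> /(le_int_of_ler_addr t1) ? /(le_int_of_ler_addl t0).
- by move=> /(le_int_of_ler_addr t1).
- by move=> _ /(le_int_of_ler_addl t0).
Qed.

Lemma not_at_upper_of_cell_point B z s (j : 'I_2) :
  closed_box h B (cell_point z s) -> ~~ s j -> ~~ at_upper B z j.
Proof.
move=> zB /negbTE sj; have hj := coord_h_gt0 j; have := (zB j).2.
rewrite /hib /at_upper coord_cell_point sj /half_offset.
by case: (hi B j) => [l|] //=; rewrite ler_pM2r // -ltNge -(ltr_int R); lra.
Qed.

Lemma bdry_plusE B (j : 'I_2) z :
  gridcl h B z -> bdry_plus h B j z <-> at_upper B z j.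
Proof.
move=> zB; have hj := coord_h_gt0 j; rewrite /bdry_plus /at_upper /hib.
have := (closure_box_set_sub zB j).2; rewrite /hib.
case E: (hi B j) => [l|] /=; last by split=> [[]|].
rewrite coord_gp ler_pM2r // ler_int => Zl; split.
  by case=> _ /(mulIf (lt0r_neq0 hj)) /eqP; rewrite eqr_int => /eqP ->.
move=> lZ; have Zl_eq : coord z j = l by apply/eqP; rewrite eq_le Zl lZ.
split; last by rewrite Zl_eq.
split=> // /interior_subset /(_ j) [_].
by rewrite /hib E /= coord_gp Zl_eq ltxx.
Qed.
End CellPoints.

Lemma eqfun_ord2 (T : Type) (f g : 'I_2 -> T) :
  f ord0 = g ord0 -> f ord_max = g ord_max -> f =1 g.
Proof. by move=> e0 e1 j; have [->|/ord2_neq0 ->] := eqVneq j ord0. Qed.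

Lemma eqfun_ord2_orb (f g : 'I_2 -> bool) (j : 'I_2) : ~~ f j -> ~~ g j ->
  f ord0 || f ord_max = g ord0 || g ord_max -> f =1 g.
Proof.
move=> fj gj fg; apply: eqfun_ord2; have [j0|/ord2_neq0 j1] := eqVneq j ord0;
  subst j; move: fj gj fg;
  by case: (f ord0); case: (f ord_max); case: (g ord0); case: (g ord_max).
Qed.

Section Decomposition.
Variables (R : realType) (h : R * R) (I : countType) (Om : box) (Omi : I -> box).
Hypotheses (h1 : 0 < h.1) (h2 : 0 < h.2).
Hypotheses (wfO : box_wf Om) (wfi : forall i, box_wf (Omi i)).
Hypothesis disj : forall i j, i != j -> box_set h (Omi i) `&` box_set h (Omi j) = set0.
Hypothesis cover : closure (box_set h Om) = \bigcup_i closure (box_set h (Omi i)).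

Lemma gridcl_sub i : gridcl h (Omi i) `<=` gridcl h Om.
Proof. by move=> z zi; rewrite /gridcl cover; exists i. Qed.

Lemma gridcl_cover : gridcl h Om `<=` \bigcup_i gridcl h (Omi i).
Proof. by move=> z; rewrite /gridcl cover => -[i _ zi]; exists i. Qed.

(* The corner pattern of [z] in [Omi i] determines a cell of [Omi i];
   disjointness forbids two pieces from sharing it. *)
Lemma box_index_inj i i' z : gridcl h (Omi i) z -> gridcl h (Omi i') z ->
  at_upper (Omi i) z =1 at_upper (Omi i') z -> i = i'.
Proof.
move=> zi zi' eq_up; apply/eqP; apply: contraT => /disj disj_ii'.
have Pi := cell_point_at_upper_in_box h1 h2 (wfi i) (closure_box_set_sub zi).
have Pi' := cell_point_at_upper_in_box h1 h2 (wfi i') (closure_box_set_sub zi').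
have : (box_set h (Omi i) `&` box_set h (Omi i')) (cell_point h z (at_upper (Omi i) z)).
  by split => //; rewrite /cell_point !eq_up.
by rewrite disj_ii'.
Qed.

Lemma gridcl_bdry_sub i (j : 'I_2) :
  gridcl h (Omi i) `\` bdry_plus h (Omi i) j `<=` gridcl h Om `\` bdry_plus h Om j.
Proof.
move=> z [zi]; rewrite (bdry_plusE h1 h2 _ zi) => /negP up_i.
have zO := gridcl_sub zi; split => //; rewrite (bdry_plusE h1 h2 _ zO); apply/negP.
have Pi := cell_point_at_upper_in_box h1 h2 (wfi i) (closure_box_set_sub zi).
have PO : closure (box_set h Om) (cell_point h z (at_upper (Omi i) z)).
  by rewrite cover; exists i => //; exact: subset_closure.
exact: (not_at_upper_of_cell_point h1 h2 (closure_box_set_sub PO) up_i).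
Qed.

Lemma gridcl_bdry_cover (j : 'I_2) : gridcl h Om `\` bdry_plus h Om j `<=`
  \bigcup_i (gridcl h (Omi i) `\` bdry_plus h (Omi i) j).
Proof.
move=> z [zO]; rewrite (bdry_plusE h1 h2 _ zO) => /negP up_O.
have PO := cell_point_at_upper_in_box h1 h2 wfO (closure_box_set_sub zO).
have [i _ /closure_box_set_sub Pi] : (\bigcup_i closure (box_set h (Omi i)))
    (cell_point h z (at_upper Om z)) by rewrite -cover; exact: subset_closure.
have zBi := closed_box_gp_of_cell_point h1 h2 Pi.
have zi : gridcl h (Omi i) z.
  exact: closed_box_sub_closure (cell_point_at_upper_in_box h1 h2 (wfi i) zBi) _ zBi.
exists i => //; split => //; rewrite (bdry_plusE h1 h2 _ zi); apply/negP.
exact: (not_at_upper_of_cell_point h1 h2 Pi up_O).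
Qed.

Variables (p : R) (u : int * int -> R).
Local Open Scope ereal_scope.

Lemma Lp_term_ge0 z : 0 <= ((`|u z| `^ p) * (h.1 * h.2))%:E.
Proof. by rewrite lee_fin mulr_ge0 ?powR_ge0 // ltW // mulr_gt0. Qed.

Lemma D_term_ge0 (j : 'I_2) z : 0 <= ((Dplus h u j z) ^+ 2 * (h.1 * h.2))%:E.
Proof. by rewrite lee_fin mulr_ge0 ?sqr_ge0 // ltW // mulr_gt0. Qed.

Lemma Lp_pow_le_sum : Lp_pow h p u Om <= \esum_(i in [set: I]) Lp_pow h p u (Omi i).
Proof. exact: le_esum_cover Lp_term_ge0 gridcl_cover. Qed.

Lemma sum_Lp_pow_le : \esum_(i in [set: I]) Lp_pow h p u (Omi i) <= 4%:E * Lp_pow h p u Om.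
Proof.
have -> : 4%:E = #|{: bool * bool}|%:R%:E :> \bar R by rewrite card_prod card_bool.
apply: (le_esum_overlap (q := fun i z => (at_upper (Omi i) z ord0, at_upper (Omi i) z ord_max)))
  => [|i|i i' z zi zi' [e0 e1]]; first exact: Lp_term_ge0.
- exact: gridcl_sub.
- exact: box_index_inj zi zi' (eqfun_ord2 e0 e1).
Qed.

Lemma D_sq_le_sum : D_sq h u Om <= \esum_(i in [set: I]) D_sq h u (Omi i).
Proof.
rewrite /D_sq esum_sum; last by move=> *; apply: esum_ge0 => *; exact: D_term_ge0.
apply: lee_sum => j _; apply: le_esum_cover; [exact: D_term_ge0 | exact: gridcl_bdry_cover].
Qed.

Lemma sum_D_sq_le : \esum_(i in [set: I]) D_sq h u (Omi i) <= 2%:E * D_sq h u Om.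
Proof.
rewrite /D_sq esum_sum; last by move=> *; apply: esum_ge0 => *; exact: D_term_ge0.
rewrite ge0_sume_distrr; last by move=> *; apply: esum_ge0 => *; exact: D_term_ge0.
apply: lee_sum => j _.
have -> : 2%:E = #|{: bool}|%:R%:E :> \bar R by rewrite card_bool.
apply: (le_esum_overlap (q := fun i z => at_upper (Omi i) z ord0 || at_upper (Omi i) z ord_max))
  => [|i|i i' z [zi nbi] [zi' nbi'] e]; first exact: D_term_ge0.
- exact: gridcl_bdry_sub.
- apply: (box_index_inj zi zi' (eqfun_ord2_orb (j := j) _ _ e)).
    by apply/negP; rewrite -(bdry_plusE h1 h2 _ zi).
  by apply/negP; rewrite -(bdry_plusE h1 h2 _ zi').
Qed.

End Decomposition.

Theorem mainTheorem16 (R : realType) (h : R * R) (I : countType)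
  (Om : box) (Omi : I -> box) (p : R) (u : int * int -> R) :
  0 < h.1 -> 0 < h.2 ->
  box_wf Om -> (forall i, box_wf (Omi i)) ->
  (forall i j, i != j -> box_set h (Omi i) `&` box_set h (Omi j) = set0) ->
  closure (box_set h Om) = \bigcup_i closure (box_set h (Omi i)) ->
  1 <= p ->
  ((Lp_pow h p u Om <= \esum_(i in [set: I]) Lp_pow h p u (Omi i))%E /\
   (\esum_(i in [set: I]) Lp_pow h p u (Omi i) <= 4%:E * Lp_pow h p u Om)%E) /\
  ((D_sq h u Om <= \esum_(i in [set: I]) D_sq h u (Omi i))%E /\
   (\esum_(i in [set: I]) D_sq h u (Omi i) <= 2%:E * D_sq h u Om)%E).
Proof.
(* Only nonnegativity of [|u z|^p] matters. *)
move=> h1 h2 wfO wfi disj cover _; split; split.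
- exact: Lp_pow_le_sum.
- exact: sum_Lp_pow_le.
- exact: D_sq_le_sum.
- exact: sum_D_sq_le.
Qed.
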